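(* Let $\mathcal L$ be a finite distributive lattice of rank $r$, let $0\le i\le j\le r$, and let $\mathcal L_{i,j}=\{p\in\mathcal L: i\le\operatorname{rank}p\le j\}$. Then there exist a poset ideal $\mathcal I$ and a poset coideal $\mathcal J$ of $\mathcal L$ such that $H_{\mathcal L_{i,j}}=H_{\mathcal I\cap\mathcal J}=H_{\mathcal I}\cap H_{\mathcal J}$.
   Context: A finite distributive lattice is graded: all maximal chains have the same length $r$ (its rank), and $\operatorname{rank}p$ denotes the rank function value of $p$ ($0$ at the minimum, increasing by $1$ along cover relations). Let $P$ be the set of join-irreducible elements of $\mathcal L$ (elements with exactly one lower neighbor); for $p\in\mathcal L$ put $\ell(p)=\{q\in P:q\le p\}$. Let $K$ be a field, $S=K[x_p,y_p:p\in P]$, $u_q=\prod_{p\in\ell(q)}x_p\prod_{p\in P\setminus\ell(q)}y_p$, and for $\mathcal S\subseteq\mathcal L$ let $H_{\mathcal S}=(u_q:q\in\mathcal S)$. Poset ideals are closed downward, poset coideals upward. *)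

From HB Require Import structures.
From mathcomp Require Import all_boot all_order all_algebra.
From mathcomp Require Import mpoly.
Set Implicit Arguments. Unset Strict Implicit. Unset Printing Implicit Defensive.
Import Order.TTheory GRing.Theory.
Local Open Scope order_scope.

Section Lattice.
Context {disp : Order.disp_t} {T : finTBDistrLatticeType disp}.

Definition covers (x y : T) : bool :=
  (x < y) && [forall z : T, ~~ ((x < z) && (z < y))].

Definition chain_of_length (n : nat) (p : T) : bool :=
  [exists s : n.-tuple T, path covers \bot (val s) && (last \bot (val s) == p)].

(* rank p: length of a (maximal) saturated chain from \bot to p; since a finite
   distributive lattice is graded, all such chains have the same length, and we
   take the maximum, which exists since chain lengths are < #|T| *)
Definition rank (p : T) : nat :=
  \max_(n < #|T| | chain_of_length n p) n.

Definition join_irr (p : T) : bool := #|[set q : T | covers q p]| == 1%N.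

Definition poset_ideal (I : {set T}) : Prop :=
  forall p q : T, q <= p -> p \in I -> q \in I.
Definition poset_coideal (J : {set T}) : Prop :=
  forall p q : T, p <= q -> p \in J -> q \in J.

Definition rank_slice (i j : nat) : {set T} :=
  [set p : T | (i <= rank p)%N && (rank p <= j)%N].
End Lattice.

Notation JI T := {p : T | join_irr p}.
(* the variables: (true, p) ~ x_p and (false, p) ~ y_p *)
Notation Var T := (bool * JI T)%type.
Notation Sring K T := {mpoly K[#|{: Var T}|]}.

Section Ideals.
Context {disp : Order.disp_t} {T : finTBDistrLatticeType disp} (K : fieldType).

Definition xvar (p : JI T) : Sring K T := 'X_(enum_rank ((true, p) : Var T)).
Definition yvar (p : JI T) : Sring K T := 'X_(enum_rank ((false, p) : Var T)).

Definition umon (q : T) : Sring K T :=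
  (\prod_(p : JI T) (if (val p <= q)%O then xvar p else yvar p))%R.

Definition inH (Sset : {set T}) (f : Sring K T) : Prop :=
  exists g : T -> Sring K T, f = (\sum_(q in Sset) g q * umon q)%R.
End Ideals.

From HB Require Import structures.
From mathcomp Require Import all_boot all_order all_algebra.
From mathcomp Require Import mpoly.
From mathcomp Require Import zify.
Set Implicit Arguments. Unset Strict Implicit. Unset Printing Implicit Defensive.
Import Order.TTheory GRing.Theory.

(* Take I = {rank <= j} and J = {rank >= i}, so that I :&: J = L_{i,j}.  The
   ideals H_S are monomial, and u_s divides lcm(u_p, u_q) whenever
   p `&` q <= s <= p `|` q: a join-irreducible a is join-prime, so (a <= s)
   agrees with (a <= p) or with (a <= q).  For p in I and q in J such an s can
   be found in L_{i,j}: take p or q if possible, and otherwise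
   rank p < i <= j < rank q, so a saturated chain from p to p `|` q, along
   which the rank goes up by exactly one at each step, meets rank i. *)

Section Rank.
Local Open Scope order_scope.
Context {disp : Order.disp_t} {T : finTBDistrLatticeType disp}.
Implicit Types (x y z a b c p q s : T).

Lemma coversP x y :
  reflect (x < y /\ forall z, ~~ ((x < z) && (z < y))) (covers x y).
Proof. by apply: (iffP andP) => -[xy /forallP]; split. Qed.

Lemma covers_lt x y : covers x y -> x < y.
Proof. by case/andP. Qed.

Lemma chain_of_lengthP n p :
  reflect (exists s : seq T, [/\ size s = n, path covers \bot s & last \bot s = p])
          (chain_of_length n p).
Proof.
apply: (iffP existsP) => [[s /andP[sP /eqP <-]] | [s [<- sP <-]]].
  by exists (val s); rewrite size_tuple.
by exists (in_tuple s); rewrite /= sP eqxx.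
Qed.

Lemma path_covers_le_last x t : path covers x t -> x <= last x t.
Proof.
elim: t x => [|z t IH] x /=; first by rewrite lexx.
by case/andP => /covers_lt/ltW xz /IH; apply: le_trans.
Qed.

Lemma size_path_covers x t : path covers x t -> (size t < #|T|)%N.
Proof.
move=> xt; have: sorted <%O (x :: t) by apply: sub_path xt => u v /covers_lt.
move/lt_sorted_uniq/card_uniqP => card_xt.
by have := max_card (mem (x :: t)); rewrite card_xt.
Qed.

Lemma chain_of_length_leq_rank n p : chain_of_length n p -> (n <= rank p)%N.
Proof.
move=> np; have n_lt : (n < #|T|)%N.
  by case/chain_of_lengthP: np => s [<- sP _]; exact: size_path_covers sP.
exact: (@leq_bigmax_cond _ (fun k : 'I_#|T| => chain_of_length k p)
          (fun k => nat_of_ord k) (Ordinal n_lt)).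
Qed.

Lemma exists_covers_ge x y : x < y -> exists2 z, x <= z & covers z y.
Proof.
have [n] := ubnP #|[set w | (x <= w) && (w < y)]|.
elim: n x => // n IH x size_lt xy.
have [xy_cov|] := boolP (covers x y); first by exists x.
rewrite /covers xy negb_forall => /existsP[z]; rewrite negbK => /andP[xz zy].
have smaller : (#|[set w | (z <= w)%O && (w < y)%O]| < n)%N.
  rewrite ltnS in size_lt; apply: leq_trans _ size_lt; apply: proper_card.
  apply/properP; split; last by exists x; rewrite !inE ?lexx ?xy ?(lt_geF xz).
  by apply/subsetP => w; rewrite !inE => /andP[/(le_trans (ltW xz)) -> ->].
have [z' zz' z'y] := IH z smaller zy.
by exists z'; first exact: le_trans (ltW xz) zz'.
Qed.

Lemma saturated_chain x y :
  x <= y -> exists t : seq T, path covers x t /\ last x t = y.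
Proof.
have [n] := ubnP #|[set w | w < y]|.
elim: n y => // n IH y size_lt xy.
have [<-|x_neq_y] := eqVneq x y; first by exists [::].
have [z xz zy] : exists2 z, x <= z & covers z y.
  by apply: exists_covers_ge; rewrite lt_neqAle x_neq_y.
have smaller : (#|[set w | (w < z)%O]| < n)%N.
  rewrite ltnS in size_lt; apply: leq_trans _ size_lt; apply: proper_card.
  apply/properP; split; last by exists z; rewrite !inE ?ltxx ?(covers_lt zy).
  by apply/subsetP => w; rewrite !inE => /lt_trans; apply; exact: covers_lt zy.
have [t [xt t_last]] := IH z smaller xz.
by exists (rcons t y); rewrite rcons_path xt t_last zy last_rcons.
Qed.

Lemma rank_chain p : chain_of_length (rank p) p.
Proof.
have [t [bot_t <-]] := saturated_chain (le0x p).
have t_chain : chain_of_length (size t) (last \bot t).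
  by apply/chain_of_lengthP; exists t.
have nonempty : (0 < #|[pred k : 'I_#|T| | chain_of_length k (last \bot t)]|)%N.
  by apply/card_gt0P; exists (Ordinal (size_path_covers bot_t)).
by have [k kP e] := eq_bigmax_cond (fun k => nat_of_ord k) nonempty; rewrite /rank e.
Qed.

Lemma rank_covers_gt x y : covers x y -> (rank x < rank y)%N.
Proof.
move=> xy; case/chain_of_lengthP: (rank_chain x) => s [s_size sP s_last].
apply: chain_of_length_leq_rank; apply/chain_of_lengthP; exists (rcons s y).
by rewrite size_rcons s_size rcons_path sP s_last xy last_rcons.
Qed.

Lemma le_rank x y : x <= y -> (rank x <= rank y)%N.
Proof.
move=> xy; case/chain_of_lengthP: (rank_chain x) => s [s_size sP s_last].
have [t [xt t_last]] := saturated_chain xy.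
have st_chain : chain_of_length (size (s ++ t)) y.
  by apply/chain_of_lengthP; exists (s ++ t); rewrite cat_path last_cat s_last sP xt.
rewrite -s_size; apply: leq_trans (chain_of_length_leq_rank st_chain).
by rewrite size_cat leq_addr.
Qed.

(* The diamond property: a `&` c < z < a would force c < z `|` c < b, since
   z `|` c = c gives z <= a `&` c and z `|` c = b gives z = a `&` (z `|` c) = a. *)
Lemma covers_meet a b c : covers a b -> covers c b -> a != c -> covers (a `&` c) a.
Proof.
move=> ab cb a_neq_c; apply/coversP; split.
  rewrite lt_neqAle leIl andbT; apply/negP => /eqP/meet_idPl ac.
  have a_lt_c : a < c by rewrite lt_neqAle a_neq_c.
  by case/coversP: ab => _ /(_ c); rewrite a_lt_c (covers_lt cb).
move=> z; apply/negP => /andP[ac_z za].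
have zb : z < b := lt_trans za (covers_lt ab).
have c_zc : c <= z `|` c by rewrite leUr.
have zc_b : z `|` c <= b by rewrite leUx (ltW zb) (ltW (covers_lt cb)).
case/coversP: cb => _ /(_ (z `|` c)).
rewrite !lt_neqAle c_zc zc_b !andbT.
have [c_eq|c_neq] := eqVneq c (z `|` c); last first.
  have [zc_eq|//] := eqVneq (z `|` c) b.
  have : a `&` (z `|` c) = z.
    by rewrite meetUr (meet_r (ltW za)); apply/join_idPl; rewrite ltW.
  by rewrite zc_eq (meet_l (ltW (covers_lt ab))) => z_eq; rewrite z_eq ltxx in za.
have z_le : z <= a `&` c by rewrite lexI ltW //= c_eq leUl.
by have := lt_le_trans ac_z z_le; rewrite ltxx.
Qed.

Lemma rank_covers x y : covers x y -> rank y = (rank x).+1.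
Proof.
suff rank_le a b : covers a b -> (rank b <= (rank a).+1)%N.
  by move=> xy; apply/eqP; rewrite eqn_leq rank_le //= rank_covers_gt.
have [n] := ubnP (rank b).
elim: n a b => // n IH a b rank_lt ab.
case/chain_of_lengthP: (rank_chain b) => s [].
case/lastP: s => [<- //|s b'].
rewrite size_rcons rcons_path last_rcons => s_size /andP[sP cb] b_eq; subst b'.
set c := last \bot s in cb.
have c_rank : (size s <= rank c)%N.
  by apply: chain_of_length_leq_rank; apply/chain_of_lengthP; exists s.
have c_lt_b := rank_covers_gt cb.
have [->|a_neq_c] := eqVneq a c; first by lia.
have c_meet : covers (a `&` c) c.
  by rewrite meetC; apply: covers_meet cb ab _; rewrite eq_sym.
have := IH _ _ _ c_meet; have := rank_covers_gt (covers_meet ab cb a_neq_c); lia.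
Qed.

Lemma exists_rank_between x y k : x <= y -> (rank x <= k <= rank y)%N ->
  exists2 s, x <= s <= y & rank s = k.
Proof.
move=> /saturated_chain[t [+ <-]].
elim: t x => [|z t IH] x /=.
  by move=> _ /andP[xk kx]; exists x; rewrite ?lexx //; apply/eqP; rewrite eqn_leq xk.
case/andP => xz zt /andP[xk kt].
have x_le_z := ltW (covers_lt xz).
have [<-|x_neq_k] := eqVneq (rank x) k.
  by exists x; rewrite // lexx (le_trans x_le_z (path_covers_le_last zt)).
have rank_z := rank_covers xz.
have [|s /andP[zs st] <-] := IH z zt; first by apply/andP; split; lia.
by exists s; rewrite ?st ?(le_trans x_le_z zs).
Qed.

Lemma join_irr_le_join a p q : join_irr a -> a <= p `|` q -> (a <= p) || (a <= q).
Proof.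
move=> a_ji a_pq; apply/negPn/negP; rewrite negb_or => /andP[a_p a_q].
have ap_lt : a `&` p < a.
  by rewrite lt_neqAle leIl andbT; apply: contra a_p => /eqP/meet_idPl.
have aq_lt : a `&` q < a.
  by rewrite lt_neqAle leIl andbT; apply: contra a_q => /eqP/meet_idPl.
have [z1 apz1 z1a] := exists_covers_ge ap_lt.
have [z2 aqz2 z2a] := exists_covers_ge aq_lt.
case/cards1P: a_ji => c lower_a.
have : z1 \in [set w | covers w a] by rewrite inE.
have : z2 \in [set w | covers w a] by rewrite inE.
rewrite lower_a !inE => /eqP z2c /eqP z1c.
have : a <= z1 by rewrite -{1}(meet_l a_pq) meetUr leUx apz1 z1c -z2c aqz2.
by move/(lt_le_trans (covers_lt z1a)); rewrite ltxx.
Qed.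

Lemma join_irr_le_between a p q s : join_irr a -> p `&` q <= s <= p `|` q ->
  ((a <= s) == (a <= p)) || ((a <= s) == (a <= q)).
Proof.
move=> a_ji /andP[pq_s s_pq]; have [a_s|a_s] := boolP (a <= s).
  by case/orP: (join_irr_le_join a_ji (le_trans a_s s_pq)) => ->; rewrite ?orbT.
have : ~~ (a <= p `&` q) by apply: contra a_s => /le_trans; apply.
by rewrite lexI negb_and => /orP[] /negPf ->; rewrite ?orbT.
Qed.

Lemma rank_slice_between i j p q :
  (i <= j)%N -> (rank p <= j)%N -> (i <= rank q)%N ->
  exists2 s, s \in rank_slice i j & p `&` q <= s <= p `|` q.
Proof.
move=> ij pj iq.
have [ip|pi] := leqP i (rank p).
  by exists p; rewrite ?inE ?ip ?pj ?leIl ?leUl.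
have [qj|jq] := leqP (rank q) j.
  by exists q; rewrite ?inE ?iq ?qj ?leIr ?leUr.
have q_pq : (rank q <= rank (p `|` q))%N by apply: le_rank; rewrite leUr.
have [|s /andP[ps s_pq] si] := exists_rank_between (k := i) (leUl p q).
  by apply/andP; split; lia.
by exists s; rewrite ?inE ?si ?leqnn ?ij ?s_pq ?(le_trans (leIl p q) ps).
Qed.

End Rank.

Section MonomialIdeals.
Local Open Scope ring_scope.
Context {disp : Order.disp_t} {T : finTBDistrLatticeType disp} (K : fieldType).
Local Notation n := #|{: Var T}|.

Definition umon_exp (q : T) : 'X_{1..n} :=
  (\big[+%MM/0%MM]_(p : JI T) U_(enum_rank (((val p <= q)%O, p) : Var T)))%MM.

Lemma umonE q : umon K q = 'X_[umon_exp q].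
Proof.
rewrite /umon /umon_exp -mprodXE; apply: eq_bigr => p _.
by rewrite /xvar /yvar; case: ifP.
Qed.

Lemma umon_expE q b (a : JI T) :
  umon_exp q (enum_rank ((b, a) : Var T)) = (b == (val a <= q)%O) :> nat.
Proof.
rewrite /umon_exp mnm_sumE (bigD1 a) //= big1 => [|p p_neq_a].
  by rewrite mnm1E (inj_eq enum_rank_inj) xpair_eqE eqxx andbT addn0 eq_sym.
by rewrite mnm1E (inj_eq enum_rank_inj) xpair_eqE (negPf p_neq_a) andbF.
Qed.

Lemma inHP (S : {set T}) (f : Sring K T) :
  inH S f <-> forall m, m \in msupp f -> exists2 q, q \in S & (umon_exp q <= m)%MM.
Proof.
split=> [[g ->] m /msupp_sum_le/flattenP[_ /mapP[q] + ->]|f_supp].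
  rewrite mem_filter umonE (perm_mem (msuppMX _ _)) => /andP[qS _] /mapP[m' _ ->].
  by exists q => //; exact: lem_addr.
pose pick_q m := [pick q in S | (umon_exp q <= m)%MM].
exists (fun q => \sum_(m <- msupp f)
  if pick_q m == Some q then f@_m *: 'X_[m - umon_exp q] else 0).
rewrite {1}[f]mpolyE.
under [RHS]eq_bigr do rewrite umonE mulr_suml.
rewrite exchange_big /=; apply: eq_big_seq => m fm.
have [q [pick_m qS qm]] :
    exists q, [/\ pick_q m = Some q, q \in S & (umon_exp q <= m)%MM].
  rewrite /pick_q; case: pickP => [q /andP[qS qm]|none]; first by exists q.
  by have [q qS qm] := f_supp m fm; move: (none q); rewrite qS qm.
rewrite (bigD1 q) //= big1 => [|q' /andP[_ q'_neq_q]].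
  by rewrite pick_m eqxx -scalerAl -mpolyXD submK // addr0.
by rewrite pick_m (inj_eq (@Some_inj _)) eq_sym (negPf q'_neq_q) mul0r.
Qed.

Lemma inH_subset (A B : {set T}) (f : Sring K T) :
  A \subset B -> inH A f -> inH B f.
Proof.
move=> AB /inHP fA; apply/inHP => m /fA[q qA qm].
by exists q; first exact: subsetP qA.
Qed.

Lemma umon_exp_le_between (p q s : T) (m : 'X_{1..n}) :
  (p `&` q <= s <= p `|` q)%O ->
  (umon_exp p <= m)%MM -> (umon_exp q <= m)%MM -> (umon_exp s <= m)%MM.
Proof.
move=> s_between pm qm; apply/mnm_lepP => k; rewrite -(enum_valK k).
case: (enum_val k) => b a.
have := mnm_lepP pm (enum_rank ((b, a) : Var T)).
have := mnm_lepP qm (enum_rank ((b, a) : Var T)).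
rewrite !umon_expE.
by case/orP: (join_irr_le_between (valP a) s_between) => /eqP ->.
Qed.

Lemma inH_between (A B C : {set T}) (f : Sring K T) :
  (forall p q, p \in A -> q \in B ->
     exists2 s, s \in C & (p `&` q <= s <= p `|` q)%O) ->
  inH A f -> inH B f -> inH C f.
Proof.
move=> between /inHP fA /inHP fB; apply/inHP => m fm.
have [p pA pm] := fA m fm; have [q qB qm] := fB m fm.
have [s sC s_between] := between p q pA qB.
by exists s; last exact: umon_exp_le_between s_between pm qm.
Qed.

End MonomialIdeals.

Theorem lemma3p13 (disp : Order.disp_t) (T : finTBDistrLatticeType disp)
  (K : fieldType) (i j : nat) :
  (i <= j)%N -> (j <= rank (\top : T)%O)%N ->
  exists (I J : {set T}),
    poset_ideal I /\ poset_coideal J /\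
    (forall f : Sring K T,
       (inH (rank_slice i j) f <-> inH (I :&: J) f) /\
       (inH (I :&: J) f <-> (inH I f /\ inH J f))).
Proof.
move=> ij _.
exists [set p : T | (rank p <= j)%N], [set p : T | (i <= rank p)%N].
have -> : [set p : T | (rank p <= j)%N] :&: [set p | (i <= rank p)%N] = rank_slice i j.
  by apply/setP => p; rewrite !inE andbC.
split; [|split].
- by move=> p q qp; rewrite !inE; apply: leq_trans; exact: le_rank.
- by move=> p q pq; rewrite !inE => /leq_trans; apply; exact: le_rank.
move=> f; split=> //; split.
  by move=> f_slice; split; apply: inH_subset f_slice; apply/subsetP => p;
    rewrite !inE => /andP[].
case=> fI fJ; apply: inH_between fI fJ => p q; rewrite !inE.
exact: rank_slice_between.
Qed.
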